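(* Let $0\le t\le 1$ and $u>0$, and let $D=\mathrm{DASEP}(3,2,2)$ with stationary distribution $\mathrm{Pd}$. Then the following are equivalent: (i) $t=1$; (ii) for every partition $\lambda$ with $\lambda_1\le 2$ and exactly $2$ nonzero parts (i.e. $\lambda\in\{(1,1,0),(2,1,0),(2,2,0)\}$) and all $\mu,\nu\in S_3(\lambda)$, $$\frac{\Pr_\lambda(\mu)}{\Pr_\lambda(\nu)}=\frac{\mathrm{Pd}(\mu)}{\mathrm{Pd}(\nu)}.$$
   Context: For a partition $\lambda=(\lambda_1\ge\dots\ge\lambda_n\ge 0)$ of nonnegative integers, $S_n(\lambda)$ denotes the set of all distinct rearrangements of $\lambda$, viewed as words $(\mu_1,\dots,\mu_n)$ whose positions $1,\dots,n$ lie on a circle. Fix $0\le t\le 1$. ASEP($\lambda$) is the Markov chain on $S_n(\lambda)$ with transition probabilities $P_{\mu,\nu}$ defined as follows. If $\mu$ has entries $i\ne j$ in adjacent positions $k,k+1$ ($1\le k\le n-1$) and $\nu$ is obtained from $\mu$ by swapping them, then $P_{\mu,\nu}=t/n$ if $i>j$ and $P_{\mu,\nu}=1/n$ if $i<j$. If $\mu=(i,\mu_2,\dots,\mu_{n-1},j)$ with $i\ne j$ and $\nu=(j,\mu_2,\dots,\mu_{n-1},i)$, then $P_{\mu,\nu}=t/n$ if $j>i$ and $P_{\mu,\nu}=1/n$ if $i>j$. All other off-diagonal transition probabilities are $0$, and the diagonal entries are chosen so that each row sums to $1$. $\Pr_\lambda$ denotes the stationary distribution of ASEP($\lambda$). Fix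 also $u>0$. For positive integers $n,p,q$ with $n>q$, DASEP$(n,p,q)$ is the Markov chain on the set of words in $\{0,1,\dots,p\}^n$ with exactly $q$ nonzero entries (equivalently, the union of $S_n(\lambda)$ over partitions $\lambda$ with $\lambda_1\le p$ and exactly $q$ nonzero parts). Its transition probabilities are as follows. The two swap rules of ASEP apply, with probabilities $t/(3n)$ and $1/(3n)$ in place of $t/n$ and $1/n$. Replacing a single entry $i$ with $1\le i\le p-1$ by $i+1$ has probability $u/(3n)$. Replacing a single entry $i+1$ with $i\ge 1$ by $i$ has probability $1/(3n)$. All other off-diagonal transition probabilities are $0$, and the diagonal entries make each row sum to $1$. $\mathrm{Pd}$ denotes the stationary distribution of the DASEP. *)

From mathcomp Require Import all_boot all_order all_algebra perm.
Set Implicit Arguments. Unset Strict Implicit. Unset Printing Implicit Defensive.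
Import Order.TTheory GRing.Theory Num.Theory.
Local Open Scope ring_scope.

(* Words of length n over the alphabet {0,...,p}; positions 0..n-1
   (= positions 1..n of the paper) lie on a circle. *)
Definition word (n p : nat) := {ffun 'I_n -> 'I_p.+1}.

Definition swapw n p (w : word n p) (a b : 'I_n) : word n p :=
  [ffun k => w (tperm a b k)].

Definition posFirst n : 'I_n.+1 := ord0.
Definition posLast n : 'I_n.+1 := ord_max.
Definition posNext n (k : 'I_n.+1) : 'I_n.+1 := inord k.+1.

Section Chains.
Variable R : realFieldType.
Variables (n p : nat).
Notation W := (word n.+1 p).

(* Swap contribution (ASEP rules), with rate parameter c in place of 1/n:
   adjacent positions k,k+1 with entries i > j : rate t*c, i < j : rate c;
   boundary swap (i,...,j) -> (j,...,i): rate t*c if j > i, rate c if i > j. *)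
Definition swap_rate (t c : R) (mu nu : W) : R :=
  \sum_(k : 'I_n.+1 | (k.+1 < n.+1)%N)
     (if (nu == swapw mu k (posNext k)) && (mu k != mu (posNext k)) then
        (if (nat_of_ord (mu (posNext k)) < mu k)%N then t * c else c)
      else 0)
  + (if (nu == swapw mu (posFirst n) (posLast n))
        && (mu (posFirst n) != mu (posLast n)) then
       (if (nat_of_ord (mu (posFirst n)) < mu (posLast n))%N then t * c else c)
     else 0).

Definition asep_off (t : R) (mu nu : W) : R :=
  swap_rate t (n.+1%:R)^-1 mu nu.

Definition differs_only_at (mu nu : W) (k : 'I_n.+1) : bool :=
  (mu k != nu k) && [forall j, (j != k) ==> (mu j == nu j)].

Definition dasep_off (t u : R) (mu nu : W) : R :=
  let c := (3 * n.+1)%:R^-1 in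
  swap_rate t c mu nu
  + \sum_(k : 'I_n.+1 | differs_only_at mu nu k)
      ((if [&& (1 <= mu k)%N, (mu k <= p.-1)%N & (nat_of_ord (nu k) == (mu k).+1)]
        then u * c else 0)
       + (if (2 <= mu k)%N && ((nu k : nat).+1 == mu k) then c else 0)).

Definition markov (S : pred W) (off : W -> W -> R) (mu nu : W) : R :=
  if mu == nu then 1 - \sum_(nu' | (nu' \in S) && (nu' != mu)) off mu nu'
  else off mu nu.

Definition stationary (S : pred W) (off : W -> W -> R) (pi : W -> R) : Prop :=
  [/\ forall w, w \in S -> 0 <= pi w,
      \sum_(w | w \in S) pi w = 1 &
      forall nu, nu \in S -> pi nu = \sum_(mu | mu \in S) pi mu * markov S off mu nu].

Definition rearr (lam : W) : pred W := fun w => perm_eq (fgraph w) (fgraph lam).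

Definition nnz (w : W) : nat := #|[set k | nat_of_ord (w k) != 0%N]|.

Definition dasep_space (q : nat) : pred W := fun w => nnz w == q.

Definition is_partition (lam : W) : bool :=
  [forall i : 'I_n.+1, forall j : 'I_n.+1, (i <= j)%N ==> (lam j <= lam i)%N].

Definition Pr_stationary (t : R) (lam : W) (pi : W -> R) : Prop :=
  stationary (rearr lam) (asep_off t) pi.

Definition Pd_stationary (t u : R) (q : nat) (pi : W -> R) : Prop :=
  stationary (dasep_space q) (dasep_off t u) pi.

End Chains.

From mathcomp Require Import all_boot all_order all_algebra perm.
From mathcomp Require Import ring lra.
Import Order.TTheory GRing.Theory Num.Theory.
Local Open Scope ring_scope.
Set Implicit Arguments. Unset Strict Implicit. Unset Printing Implicit Defensive.

(* Both chains are irreducible, so their stationary distributions are positive,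
   unique, and hence invariant under every symmetry of the rates.  Rotating the
   circle of positions is always such a symmetry; reflecting it exchanges the
   swap rates t and 1, so it is one when t = 1.  Rotations and reflections act
   transitively on each S_3(lambda), so for t = 1 both Pr_lambda and Pd are
   constant there and all ratios equal 1.  Conversely, for lambda = (2,1,0),
   Pr_lambda(120) / Pr_lambda(210) = (1 + 2t) / (2 + t), whereas the balance
   equations of the DASEP at 120 and 210 give
   Pd(120) / Pd(210) = (u + 3 + 4t) / (u + 5 + 2t); these agree only if
   (1 - t)(u + 1) = 0.  Facts about the finitely many words of length 3 are
   checked by computation on their codes as triples of integers. *)

Section Stationary.
Variables (R : realFieldType) (n p : nat).
Local Notation T := (word n.+1 p).
Variables (S : pred T) (off : T -> T -> R).
Hypothesis off_diag : forall w, off w w = 0.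

Definition inflow (pi : T -> R) nu := \sum_(mu | mu \in S) pi mu * off mu nu.
Definition outrate nu := \sum_(nu' | nu' \in S) off nu nu'.

Lemma sum_markov pi nu : nu \in S ->
  \sum_(mu | mu \in S) pi mu * markov S off mu nu = pi nu - pi nu * outrate nu + inflow pi nu.
Proof.
move=> nuS; rewrite (bigD1 nu) //= /markov eqxx.
have -> : \sum_(nu' | (nu' \in S) && (nu' != nu)) off nu nu' = outrate nu.
  by rewrite /outrate [in RHS](bigD1 nu) //= off_diag add0r.
have -> : inflow pi nu = \sum_(mu | (mu \in S) && (mu != nu)) pi mu * off mu nu.
  by rewrite /inflow (bigD1 nu) //= off_diag mulr0 add0r.
rewrite mulrBr mulr1; congr (_ + _).
by apply: eq_bigr => mu /andP[_ /negbTE]; rewrite eq_sym => ->.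
Qed.

Lemma stationary_balance pi : stationary S off pi ->
  forall nu, nu \in S -> inflow pi nu = pi nu * outrate nu.
Proof.
case=> _ _ pi_fix nu nuS; have := pi_fix nu nuS; rewrite sum_markov // => pi_nu.
by apply: (addrI (pi nu - pi nu * outrate nu)); rewrite -pi_nu; ring.
Qed.

Lemma balance_stationary pi : (forall w, w \in S -> 0 <= pi w) ->
  \sum_(w | w \in S) pi w = 1 ->
  (forall nu, nu \in S -> inflow pi nu = pi nu * outrate nu) -> stationary S off pi.
Proof. by move=> pi_ge0 pi_sum1 bal; split=> // nu nuS; rewrite sum_markov // bal //; ring. Qed.

Hypothesis off_ge0 : forall a b, 0 <= off a b.

(* Irreducibility in the form of the induction principle it provides: a
   property that passes from a state to each of its predecessors along a
   positive rate spreads from any state to all of S. *)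
Definition irreducible := forall Z : T -> Prop,
  (forall a b, a \in S -> b \in S -> Z a -> 0 < off b a -> Z b) ->
  forall a b, a \in S -> b \in S -> Z a -> Z b.

Hypothesis S_irr : irreducible.

Lemma inflow_subZ pi pi' (l : R) nu :
  inflow (fun w => pi w - l * pi' w) nu = inflow pi nu - l * inflow pi' nu.
Proof. by rewrite /inflow mulr_sumr -sumrB; apply: eq_bigr => mu _; ring. Qed.

Lemma balanced_eq0 (d : T -> R) : (forall w, w \in S -> 0 <= d w) ->
  (forall nu, nu \in S -> inflow d nu = d nu * outrate nu) ->
  forall a b, a \in S -> b \in S -> d a = 0 -> d b = 0.
Proof.
move=> d_ge0 bal; apply: S_irr => a b aS bS da0 off_ba.
have terms_ge0 mu : mu \in S -> 0 <= d mu * off mu a.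
  by move=> muS; rewrite mulr_ge0 ?d_ge0.
have /(psumr_eq0P terms_ge0) terms0 : inflow d a = 0 by rewrite bal // da0 mul0r.
by move/eqP: (terms0 b bS); rewrite mulf_eq0 (gt_eqF off_ba) orbF => /eqP.
Qed.

Lemma stationary_gt0 pi : stationary S off pi -> forall w, w \in S -> 0 < pi w.
Proof.
move=> pi_st w wS; have bal := stationary_balance pi_st.
case: pi_st => pi_ge0 pi_sum1 _; rewrite lt_def pi_ge0 // andbT.
apply/eqP => pi_w0; move: pi_sum1; rewrite big1 => [/esym/eqP|b bS].
  by rewrite oner_eq0.
exact: balanced_eq0 pi_ge0 bal w b wS bS pi_w0.
Qed.

(* Subtract the largest multiple of pi' lying below pi: the difference is
   nonnegative, balanced and vanishes at a minimiser of pi / pi'. *)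
Lemma stationary_unique pi pi' : stationary S off pi -> stationary S off pi' ->
  forall w, w \in S -> pi w = pi' w.
Proof.
move=> pi_st pi'_st w0 w0S.
have pi'_gt0 := stationary_gt0 pi'_st.
case: (arg_minP (fun w => pi w / pi' w) w0S) => ws wsS ws_min.
set l := pi ws / pi' ws; pose d w := pi w - l * pi' w.
have d_ge0 w : w \in S -> 0 <= d w.
  by move=> wS; rewrite /d subr_ge0 -ler_pdivlMr ?pi'_gt0 //; exact: ws_min.
have d_bal nu : nu \in S -> inflow d nu = d nu * outrate nu.
  move=> nuS; rewrite inflow_subZ (stationary_balance pi_st) //.
  by rewrite (stationary_balance pi'_st) // /d; ring.
have d_ws : d ws = 0 by rewrite /d /l divfK ?subrr // gt_eqF ?pi'_gt0.
have pi_eq b : b \in S -> pi b = l * pi' b.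
  move=> bS; apply/eqP; rewrite -subr_eq0; apply/eqP.
  exact: balanced_eq0 d_ge0 d_bal ws b wsS bS d_ws.
have l1 : l = 1.
  case: pi_st pi'_st => _ + _ [_ + _]; rewrite (eq_bigr _ pi_eq) -mulr_sumr.
  by move=> + sum1; rewrite sum1 mulr1.
by rewrite pi_eq // l1 mul1r.
Qed.

End Stationary.

Section Symmetry.
Variables (R : realFieldType) (n p : nat).
Local Notation T := (word n.+1 p).
Variables (S : pred T) (off : T -> T -> R) (f : T -> T).
Hypothesis f_inj : injective f.
Hypothesis f_S : forall w, (f w \in S) = (w \in S).
Hypothesis f_off : forall a b, off (f a) (f b) = off a b.

Lemma stationary_comp pi : stationary S off pi -> stationary S off (pi \o f).
Proof.
case=> pi_ge0 pi_sum1 pi_fix; split=> [w wS||].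
- by apply: pi_ge0; rewrite f_S.
- by rewrite -pi_sum1 [RHS](reindex_inj f_inj); apply: eq_bigl => w; rewrite f_S.
move=> nu nuS; rewrite /= pi_fix ?f_S // [LHS](reindex_inj f_inj) /=.
apply: eq_big => [w|mu _]; first by rewrite f_S.
rewrite /markov (inj_eq f_inj) f_off; case: (mu == nu) => //; congr (_ * (_ - _)).
rewrite (reindex_inj f_inj) /=; apply: eq_big => [w|w _]; last exact: f_off.
by rewrite f_S (inj_eq f_inj).
Qed.

Hypotheses (off_diag : forall w, off w w = 0) (off_ge0 : forall a b, 0 <= off a b).
Hypothesis S_irr : irreducible S off.

Lemma stationary_invariant pi : stationary S off pi -> forall w, w \in S -> pi (f w) = pi w.
Proof.
move=> pi_st w wS.
exact: (stationary_unique off_diag off_ge0 S_irr (stationary_comp pi_st) pi_st wS).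
Qed.

End Symmetry.

Lemma nnz_count n p (w : word n.+1 p) :
  nnz w = count (fun v : 'I_p.+1 => nat_of_ord v != 0%N) (fgraph w).
Proof.
by rewrite /nnz cardsE cardE /enum_mem size_filter -enumT fgraph_codom /= codomE count_map.
Qed.

Lemma nnz_rearr n p (lam w : word n.+1 p) : w \in rearr lam -> nnz w = nnz lam.
Proof. by rewrite !nnz_count => /seq.permP ->. Qed.

Local Notation W := (word 3 2).

Definition triple := (nat * nat * nat)%type.

Definition entry (x : triple) (i : nat) : nat :=
  match i with 0 => x.1.1 | 1 => x.1.2 | _ => x.2 end.
Definition in_range (x : triple) := [&& x.1.1 < 3, x.1.2 < 3 & x.2 < 3]%N.

Definition o0 : 'I_3 := @Ordinal 3 0 isT.
Definition o1 : 'I_3 := @Ordinal 3 1 isT.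
Definition o2 : 'I_3 := @Ordinal 3 2 isT.

Definition code (w : W) : triple := (nat_of_ord (w o0), nat_of_ord (w o1), nat_of_ord (w o2)).
Definition decode (x : triple) : W := [ffun i : 'I_3 => inord (entry x i)].

Lemma ord3P (i : 'I_3) : [\/ i = o0, i = o1 | i = o2].
Proof.
by case: i => [[|[|[|m]]] lt_i3] //; [apply: Or31|apply: Or32|apply: Or33]; apply: val_inj.
Qed.

Lemma code_entry (w : W) (i : 'I_3) : nat_of_ord (w i) = entry (code w) i.
Proof. by case: (ord3P i) => ->. Qed.

Lemma code_inj : injective code.
Proof.
by move=> w w' eq_code; apply/ffunP => i; apply: val_inj; rewrite /= !code_entry eq_code.
Qed.

Lemma code_in_range w : in_range (code w).
Proof. by rewrite /in_range /= !ltn_ord. Qed.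

Lemma decodeK x : in_range x -> code (decode x) = x.
Proof. by case: x => [[a b] c] /and3P[/= ? ? ?]; rewrite /code !ffunE /= !inordK. Qed.

Lemma codeK : cancel code decode.
Proof. by move=> w; apply/ffunP => i; apply: val_inj; rewrite ffunE /= inordK -code_entry. Qed.

Lemma eq_code (a b : W) : (a == b) = (code a == code b).
Proof. by rewrite (inj_eq code_inj). Qed.

Lemma eq_entry (mu nu : W) (i j : 'I_3) :
  (mu i == nu j) = (entry (code mu) i == entry (code nu) j).
Proof. by rewrite -!code_entry. Qed.

Definition tperm_nat (i j k : nat) : nat := if k == i then j else if k == j then i else k.
Definition swap_entries (x : triple) (i j : nat) : triple :=
  (entry x (tperm_nat i j 0), entry x (tperm_nat i j 1), entry x (tperm_nat i j 2)).

Lemma tperm_natE (i j k : 'I_3) : nat_of_ord (tperm i j k) = tperm_nat i j k.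
Proof.
rewrite /tperm_nat; case: tpermP => [->|->|ne_ki ne_kj]; rewrite ?eqxx //.
  by case: eqP => // /val_inj ->.
by case: eqP => [/val_inj //|_]; case: eqP => [/val_inj //|_].
Qed.

Lemma code_swapw (mu : W) (i j : 'I_3) : code (swapw mu i j) = swap_entries (code mu) i j.
Proof. by rewrite /swapw {1}/code !ffunE !code_entry !tperm_natE. Qed.

(* [swap_counts x y] counts the swaps x -> y of rate t c and those of rate c;
   the boundary swap is that of the cyclically adjacent positions 2, 0. *)
Definition is_swap (x y : triple) (i j : nat) : bool :=
  (y == swap_entries x i j) && (entry x i != entry x j).
Definition swap_counts (x y : triple) : nat * nat :=
  let slow i j := is_swap x y i j && (entry x j < entry x i)%N in
  let fast i j := is_swap x y i j && ~~ (entry x j < entry x i)%N in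
  (slow 0 1 + slow 1 2 + slow 2 0, fast 0 1 + fast 1 2 + fast 2 0)%N.

Lemma rate_ifE (R : realFieldType) (A B : bool) (t c : R) :
  (if A then (if B then t * c else c) else 0) =
  (((A && B) : nat)%:R * t + ((A && ~~ B) : nat)%:R) * c.
Proof. by case: A; case: B; rewrite /= ?mulr1n ?mulr0n; ring. Qed.

Lemma swap_rateE (R : realFieldType) (t c : R) (mu nu : W) :
  swap_rate t c mu nu =
  ((swap_counts (code mu) (code nu)).1%:R * t + (swap_counts (code mu) (code nu)).2%:R) * c.
Proof.
rewrite /swap_rate big_mkcond !big_ord_recl big_ord0 /= !rate_ifE.
rewrite !eq_code !code_swapw !eq_entry !code_entry /posNext !inordK //=.
rewrite /swap_counts /is_swap /bump /= [nat_of_ord (mu o2) == _]eq_sym.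
have -> : swap_entries (code mu) 2 0 = swap_entries (code mu) 0 2 by [].
by rewrite !natrD; ring.
Qed.

(* With p = 2 the only jumps are 1 -> 2 (rate u c) and 2 -> 1 (rate c). *)
Definition differs_only_at3 (x y : triple) (k : nat) : bool :=
  (entry x k != entry y k) && all (fun j => (j != k) ==> (entry x j == entry y j)) [:: 0; 1; 2]%N.
Definition grows_at (x y : triple) (k : nat) : bool :=
  [&& 1 <= entry x k, entry x k <= 1 & entry y k == (entry x k).+1]%N.
Definition shrinks_at (x y : triple) (k : nat) : bool :=
  (2 <= entry x k)%N && ((entry y k).+1 == entry x k).
Definition jump_counts (x y : triple) : nat * nat :=
  let up k := differs_only_at3 x y k && grows_at x y k in
  let down k := differs_only_at3 x y k && shrinks_at x y k in
  (up 0 + up 1 + up 2, down 0 + down 1 + down 2)%N.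

Lemma jump_ifE (R : realFieldType) (D A B : bool) (u c : R) :
  (if D then ((if A then u * c else 0) + (if B then c else 0)) else 0) =
  (((D && A) : nat)%:R * u + ((D && B) : nat)%:R) * c.
Proof. by case: D; case: A; case: B; rewrite /= ?mulr1n ?mulr0n; ring. Qed.

Lemma forall_ord3 (P : pred 'I_3) : [forall j, P j] = [&& P o0, P o1 & P o2].
Proof.
apply/forallP/and3P => [P_all|[P0 P1 P2] j]; first by split; apply: P_all.
by case: (ord3P j) => ->.
Qed.

Definition dasep_c (R : realFieldType) : R := (3 * 3)%:R^-1.

Lemma dasep_offE (R : realFieldType) (t u : R) (mu nu : W) :
  dasep_off t u mu nu =
  ((swap_counts (code mu) (code nu)).1%:R * t + (swap_counts (code mu) (code nu)).2%:R)
    * dasep_c R +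
  ((jump_counts (code mu) (code nu)).1%:R * u + (jump_counts (code mu) (code nu)).2%:R)
    * dasep_c R.
Proof.
rewrite /dasep_off swap_rateE; congr (_ + _).
rewrite big_mkcond !big_ord_recl big_ord0 /differs_only_at /=.
rewrite !forall_ord3 !jump_ifE !eq_entry !code_entry /=.
by rewrite /jump_counts /differs_only_at3 /grows_at /shrinks_at /= !andbT !natrD /dasep_c; ring.
Qed.

Definition asep_c (R : realFieldType) : R := 3%:R^-1.

Lemma asep_offE (R : realFieldType) (t : R) (mu nu : W) :
  asep_off t mu nu =
  ((swap_counts (code mu) (code nu)).1%:R * t + (swap_counts (code mu) (code nu)).2%:R) * asep_c R.
Proof. exact: swap_rateE. Qed.

Definition entries (x : triple) : seq nat := [:: x.1.1; x.1.2; x.2].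
Definition nnz3 (x : triple) : nat := count (fun v => v != 0)%N (entries x).
Definition partition3 (x : triple) : bool := (x.1.2 <= x.1.1)%N && (x.2 <= x.1.2)%N.

Lemma enum_ord3 : enum 'I_3 = [:: o0; o1; o2].
Proof. by apply: (inj_map val_inj); rewrite val_enum_ord. Qed.

Lemma fgraph_code (w : W) : map val (fgraph w) = entries (code w).
Proof. by rewrite fgraph_codom /= codomE enum_ord3. Qed.

Lemma nnz_code (w : W) : nnz w = nnz3 (code w).
Proof. by rewrite nnz_count /nnz3 -fgraph_code [RHS]count_map. Qed.

Lemma dasep_space_code (w : W) : (w \in dasep_space 2) = (nnz3 (code w) == 2%N).
Proof. by rewrite unfold_in /dasep_space /= nnz_code. Qed.

Lemma rearr_code (w lam : W) : (w \in rearr lam) = perm_eq (entries (code w)) (entries (code lam)).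
Proof.
rewrite unfold_in /rearr /= -!fgraph_code; apply/idP/idP; first exact: perm_map.
by apply: (@perm_map_inj _ _ (@nat_of_ord 3)); apply: val_inj.
Qed.

Lemma is_partition_code (lam : W) : is_partition lam = partition3 (code lam).
Proof.
rewrite /is_partition !forall_ord3 /= !code_entry /= /partition3 !leqnn /= andbT.
case: (leqP (lam o1) (lam o0)) => [le10|]; case: (leqP (lam o2) (lam o1)) => [le21|] //=.
  by rewrite (leq_trans le21 le10).
by rewrite andbF.
Qed.

Definition triples : seq triple :=
  [seq (ab, c) | ab <- [seq (a, b) | a <- iota 0 3, b <- iota 0 3], c <- iota 0 3].

Lemma mem_triples x : (x \in triples) = in_range x.
Proof.
apply/idP/idP => [|/and3P[a_lt b_lt c_lt]]; first by apply/allP; vm_compute.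
by case: x a_lt b_lt c_lt => [[a b] c] /= *; rewrite !allpairs_f // mem_iota.
Qed.

Lemma all_triples_code (P : pred triple) : all P triples -> forall w : W, P (code w).
Proof. by move=> /allP P_all w; apply: P_all; rewrite mem_triples code_in_range. Qed.

Lemma all_triples2_code (P : triple -> pred triple) :
  all (fun x => all (P x) triples) triples -> forall a b : W, P (code a) (code b).
Proof. by move=> P_all a b; apply: (all_triples_code (all_triples_code P_all a)). Qed.

Definition sel_triples (P : pred triple) := [seq x <- triples | P x].

Lemma sel_triples_in_range P : all in_range (sel_triples P).
Proof. by apply/allP => x; rewrite mem_filter mem_triples => /andP[]. Qed.

Lemma sel_triples_uniq P : uniq (sel_triples P).
Proof. by apply: filter_uniq; vm_compute. Qed.

Lemma mem_sel_triples P (w : W) : (code w \in sel_triples P) = P (code w).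
Proof. by rewrite mem_filter mem_triples code_in_range andbT. Qed.

Lemma big_code (R : realFieldType) (F : W -> R) (P : pred W) (L : seq triple) :
  all in_range L -> uniq L -> (forall w, P w = (code w \in L)) ->
  \sum_(w | P w) F w = \sum_(x <- L) F (decode x).
Proof.
move=> /allP L_range L_uniq P_L; rewrite -(big_map decode xpredT F) big_uniq.
  apply: eq_bigl => w; rewrite P_L; apply/idP/mapP => [|[x xL ->]].
    by exists (code w); rewrite ?codeK.
  by rewrite decodeK ?L_range.
rewrite map_inj_in_uniq // => x y xL yL eq_xy.
by rewrite -(decodeK (L_range x xL)) eq_xy decodeK ?L_range.
Qed.

(* Breadth-first reachability inside L along e; [size L] rounds suffice. *)
Definition reach_step (e : rel triple) (L K : seq triple) :=
  undup (K ++ [seq y <- L | has (e^~ y) K]).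
Definition reach (e : rel triple) (L : seq triple) (a : triple) :=
  iter (size L) (reach_step e L) [:: a].
Definition all_reachable (e : rel triple) (L : seq triple) :=
  all (fun a => all (mem (reach e L a)) L) L.

Lemma reach_ind (Z : triple -> Prop) (e : rel triple) (L : seq triple) a :
  a \in L -> Z a -> (forall x y, x \in L -> y \in L -> e x y -> Z x -> Z y) ->
  forall y, y \in reach e L a -> Z y.
Proof.
move=> aL Za Z_e; suff reach_k k y : y \in iter k (reach_step e L) [:: a] -> (y \in L) /\ Z y.
  by move=> y /reach_k[].
elim: k y => [|k IHk] y /=; first by rewrite inE => /eqP ->.
rewrite /reach_step mem_undup mem_cat => /orP[/IHk //|].
rewrite mem_filter => /andP[/hasP[x /IHk[xL Zx] exy] yL]; split=> //.
exact: Z_e exy Zx.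
Qed.

Lemma irreducible_reach (R : realFieldType) (S : pred W) (off : W -> W -> R)
    (L : seq triple) (e : rel triple) :
  all in_range L -> (forall w, (w \in S) = (code w \in L)) ->
  (forall x y, x \in L -> y \in L -> e x y -> 0 < off (decode y) (decode x)) ->
  all_reachable e L -> irreducible S off.
Proof.
move=> /allP L_range S_L e_off /allP L_reach Z Z_off a b aS bS Za.
move: aS bS; rewrite !S_L => aS bS; rewrite -(codeK b).
apply: (@reach_ind (Z \o decode) e L (code a)) => //=; first by rewrite codeK.
  move=> x y xL yL exy Zx; apply: (Z_off (decode x)) => //; last exact: e_off.
    by rewrite S_L decodeK ?L_range.
  by rewrite S_L decodeK ?L_range.
exact: (allP (L_reach _ aS)).
Qed.

Definition rot3 (x : triple) : triple := (x.1.2, x.2, x.1.1).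
Definition swap01 (x : triple) : triple := (x.1.2, x.1.1, x.2).

(* Rotation and the reflection k |-> 1 - k of the circle of positions. *)
Definition wrot (w : W) : W := [ffun k : 'I_3 => w (inord (k.+1 %% 3))].
Definition wswap (w : W) : W := [ffun k : 'I_3 => w (inord (tperm_nat 0 1 k))].

Lemma code_wrot w : code (wrot w) = rot3 (code w).
Proof. by rewrite /code !ffunE /= !code_entry !inordK. Qed.
Lemma code_wswap w : code (wswap w) = swap01 (code w).
Proof. by rewrite /code !ffunE /= !code_entry !inordK. Qed.

Lemma wrot_inj : injective wrot.
Proof.
move=> a b /(congr1 code); rewrite !code_wrot => eq_rot; apply: code_inj.
by move: eq_rot; case: (code a) => [[? ?] ?]; case: (code b) => [[? ?] ?] [-> -> ->].
Qed.
Lemma wswapK : involutive wswap.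
Proof. by move=> w; apply: code_inj; rewrite !code_wswap; case: (code w) => [[]]. Qed.

Lemma in_range_rot3 x : in_range (rot3 x) = in_range x.
Proof. by case: x => [[a b] c]; rewrite /in_range /=; do 3!case: (_ < 3)%N. Qed.
Lemma in_range_swap01 x : in_range (swap01 x) = in_range x.
Proof. by case: x => [[a b] c]; rewrite /in_range /=; do 3!case: (_ < 3)%N. Qed.

Lemma wrot_decode x : in_range x -> wrot (decode x) = decode (rot3 x).
Proof. by move=> x_range; apply: code_inj; rewrite code_wrot !decodeK ?in_range_rot3. Qed.
Lemma wswap_decode x : in_range x -> wswap (decode x) = decode (swap01 x).
Proof. by move=> x_range; apply: code_inj; rewrite code_wswap !decodeK ?in_range_swap01. Qed.

Lemma perm_entries_rot3 x : perm_eq (entries (rot3 x)) (entries x).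
Proof. by case: x => [[a b] c]; rewrite -[entries _]/(rot 1 [:: a; b; c]) perm_rot. Qed.
Lemma perm_entries_swap01 x : perm_eq (entries (swap01 x)) (entries x).
Proof.
by case: x => [[a b] c]; rewrite -[entries _]/([:: b] ++ [:: a] ++ [:: c]) perm_catCA.
Qed.

Lemma rearr_wrot lam w : (wrot w \in rearr lam) = (w \in rearr lam).
Proof. by rewrite !rearr_code code_wrot; move/permPl: (perm_entries_rot3 (code w)) => ->. Qed.
Lemma rearr_wswap lam w : (wswap w \in rearr lam) = (w \in rearr lam).
Proof. by rewrite !rearr_code code_wswap; move/permPl: (perm_entries_swap01 (code w)) => ->. Qed.

Lemma dasep_space_wrot w : (wrot w \in dasep_space 2) = (w \in dasep_space 2).
Proof. by rewrite !dasep_space_code code_wrot /nnz3 (seq.permP (perm_entries_rot3 _)). Qed.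
Lemma dasep_space_wswap w : (wswap w \in dasep_space 2) = (w \in dasep_space 2).
Proof. by rewrite !dasep_space_code code_wswap /nnz3 (seq.permP (perm_entries_swap01 _)). Qed.

Local Notation SD := (@dasep_space 2 2 2).
Local Notation dasep t u := (@dasep_off _ 2 2 t u).
Local Notation asep t := (@asep_off _ 2 2 t).

Lemma counts_diag :
  all (fun x => (swap_counts x x == (0, 0)) && (jump_counts x x == (0, 0)))%N triples.
Proof. by vm_compute. Qed.

Lemma counts_rot3 : all (fun x => all (fun y =>
  (swap_counts (rot3 x) (rot3 y) == swap_counts x y) &&
  (jump_counts (rot3 x) (rot3 y) == jump_counts x y)) triples) triples.
Proof. by vm_compute. Qed.

(* The reflection reverses the orientation of the circle, so it exchanges the
   two kinds of swaps: only their total is invariant, whence t = 1 below. *)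
Lemma counts_swap01 : all (fun x => all (fun y =>
  ((swap_counts (swap01 x) (swap01 y)).1 + (swap_counts (swap01 x) (swap01 y)).2 ==
     (swap_counts x y).1 + (swap_counts x y).2)%N &&
  (jump_counts (swap01 x) (swap01 y) == jump_counts x y)) triples) triples.
Proof. by vm_compute. Qed.

Lemma dasep_off_diag (R : realFieldType) (t u : R) w : dasep t u w w = 0.
Proof.
rewrite dasep_offE; case/andP: (all_triples_code counts_diag w) => /eqP -> /eqP ->.
by rewrite /=; ring.
Qed.
Lemma asep_off_diag (R : realFieldType) (t : R) w : asep t w w = 0.
Proof.
by rewrite asep_offE; case/andP: (all_triples_code counts_diag w) => /eqP -> _; rewrite /=; ring.
Qed.

Lemma dasep_c_gt0 (R : realFieldType) : 0 < dasep_c R.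
Proof. by rewrite invr_gt0 ltr0n. Qed.
Lemma asep_c_gt0 (R : realFieldType) : 0 < asep_c R.
Proof. by rewrite invr_gt0 ltr0n. Qed.

Lemma dasep_off_ge0 (R : realFieldType) (t u : R) :
  0 <= t -> 0 < u -> forall a b, 0 <= dasep t u a b.
Proof.
move=> t_ge0 u_gt0 a b; rewrite dasep_offE -mulrDl mulr_ge0 ?(ltW (dasep_c_gt0 R)) //.
by rewrite !addr_ge0 ?mulr_ge0 ?(ltW u_gt0).
Qed.
Lemma asep_off_ge0 (R : realFieldType) (t : R) : 0 <= t -> forall a b, 0 <= asep t a b.
Proof.
by move=> t_ge0 a b; rewrite asep_offE mulr_ge0 ?addr_ge0 ?mulr_ge0 ?(ltW (asep_c_gt0 R)).
Qed.

Lemma dasep_off_wrot (R : realFieldType) (t u : R) a b :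
  dasep t u (wrot a) (wrot b) = dasep t u a b.
Proof.
rewrite !dasep_offE !code_wrot.
by case/andP: (all_triples2_code counts_rot3 a b) => /eqP -> /eqP ->.
Qed.
Lemma asep_off_wrot (R : realFieldType) (t : R) a b : asep t (wrot a) (wrot b) = asep t a b.
Proof.
by rewrite !asep_offE !code_wrot; case/andP: (all_triples2_code counts_rot3 a b) => /eqP -> _.
Qed.

Lemma dasep1_off_wswap (R : realFieldType) (u : R) a b :
  dasep 1 u (wswap a) (wswap b) = dasep 1 u a b.
Proof.
rewrite !dasep_offE !code_wswap.
case/andP: (all_triples2_code counts_swap01 a b) => /eqP sum_eq /eqP ->.
by rewrite !mulr1 -!natrD sum_eq.
Qed.
Lemma asep1_off_wswap (R : realFieldType) a b : asep (1 : R) (wswap a) (wswap b) = asep 1 a b.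
Proof.
rewrite !asep_offE !code_wswap; case/andP: (all_triples2_code counts_swap01 a b) => /eqP sum_eq _.
by rewrite !mulr1 -!natrD sum_eq.
Qed.

Definition dasep_triples := sel_triples (fun x => nnz3 x == 2%N).
Definition rearr_triples (l : triple) := sel_triples (fun x => perm_eq (entries x) (entries l)).

Lemma SD_triples w : (w \in SD) = (code w \in dasep_triples).
Proof. by rewrite dasep_space_code mem_sel_triples. Qed.

Lemma rearr_triples_code lam w : (w \in rearr lam) = (code w \in rearr_triples (code lam)).
Proof. by rewrite rearr_code mem_sel_triples. Qed.

(* The transitions used for connectivity are those whose rate does not vanish at t = 0. *)
Lemma dasep_reachable : all_reachable
  (fun x y => (swap_counts y x).2 + (jump_counts y x).1 + (jump_counts y x).2 != 0)%N dasep_triples.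
Proof. by vm_compute. Qed.

Lemma asep_reachable :
  all (fun l => all_reachable (fun x y => (swap_counts y x).2 != 0)%N (rearr_triples l)) triples.
Proof. by vm_compute. Qed.

Lemma rate_comb_gt0 (R : realFieldType) (t u : R) (a b c d : nat) : 0 <= t -> 0 < u ->
  (b + c + d != 0)%N -> 0 < a%:R * t + b%:R + (c%:R * u + d%:R).
Proof.
move=> t_ge0 u_gt0 bcd_neq0; have at_ge0 : 0 <= a%:R * t by rewrite mulr_ge0.
case: c bcd_neq0 => [|c] bcd_neq0.
  have : 0 < (b + d)%:R :> R by rewrite ltr0n lt0n -[(b + d)%N]addn0 addnAC.
  by rewrite natrD mulr0n mul0r; lra.
have : 0 < c.+1%:R * u by rewrite mulr_gt0 ?ltr0n.
by have := ler0n R b; have := ler0n R d; lra.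
Qed.

Lemma dasep_irreducible (R : realFieldType) (t u : R) :
  0 <= t -> 0 < u -> irreducible SD (dasep t u).
Proof.
move=> t_ge0 u_gt0; apply: irreducible_reach (sel_triples_in_range _) SD_triples _ dasep_reachable.
move=> x y /(allP (sel_triples_in_range _)) x_range /(allP (sel_triples_in_range _)) y_range e_yx.
by rewrite dasep_offE !decodeK // -mulrDl mulr_gt0 ?dasep_c_gt0 ?rate_comb_gt0.
Qed.

Lemma asep_irreducible (R : realFieldType) (t : R) lam : 0 <= t -> irreducible (rearr lam) (asep t).
Proof.
move=> t_ge0; apply: (irreducible_reach (e := fun x y => (swap_counts y x).2 != 0%N))
  (sel_triples_in_range _) (rearr_triples_code lam) _ _.
  move=> x y /(allP (sel_triples_in_range _)) x_range /(allP (sel_triples_in_range _)) y_range e_yx.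
  by rewrite asep_offE !decodeK // mulr_gt0 ?asep_c_gt0 // ltr_wpDl ?mulr_ge0 // ltr0n lt0n.
exact: (all_triples_code asep_reachable).
Qed.

Section DasepStationary.
Variables (R : realFieldType) (t u : R) (Pd : W -> R).
Hypotheses (t_ge0 : 0 <= t) (u_gt0 : 0 < u) (Pd_st : stationary SD (dasep t u) Pd).

Lemma Pd_gt0 : {in SD, forall w, 0 < Pd w}.
Proof.
move=> w wS; exact: (stationary_gt0 (@dasep_off_diag R t u) (dasep_off_ge0 t_ge0 u_gt0)
  (dasep_irreducible t_ge0 u_gt0) Pd_st wS).
Qed.

Lemma Pd_wrot : {in SD, forall w, Pd (wrot w) = Pd w}.
Proof.
move=> w wS; exact: (stationary_invariant wrot_inj dasep_space_wrot
  (@dasep_off_wrot R t u) (@dasep_off_diag R t u) (dasep_off_ge0 t_ge0 u_gt0)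
  (dasep_irreducible t_ge0 u_gt0) Pd_st wS).
Qed.

End DasepStationary.

Lemma Pd1_wswap (R : realFieldType) (u : R) (Pd : W -> R) :
  0 < u -> stationary SD (dasep 1 u) Pd -> {in SD, forall w, Pd (wswap w) = Pd w}.
Proof.
move=> u_gt0 Pd_st w wS; exact: (stationary_invariant (can_inj wswapK) dasep_space_wswap
  (@dasep1_off_wswap R u) (@dasep_off_diag R 1 u) (dasep_off_ge0 ler01 u_gt0)
  (dasep_irreducible ler01 u_gt0) Pd_st wS).
Qed.

Section AsepStationary.
Variables (R : realFieldType) (t : R) (lam : W) (Pr : W -> R).
Hypotheses (t_ge0 : 0 <= t) (Pr_st : stationary (rearr lam) (asep t) Pr).

Lemma Pr_gt0 : {in rearr lam, forall w, 0 < Pr w}.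
Proof.
move=> w wS; exact: (stationary_gt0 (@asep_off_diag R t) (asep_off_ge0 t_ge0)
  (asep_irreducible t_ge0) Pr_st wS).
Qed.

Lemma Pr_wrot : {in rearr lam, forall w, Pr (wrot w) = Pr w}.
Proof.
move=> w wS; exact: (stationary_invariant wrot_inj (@rearr_wrot lam) (@asep_off_wrot R t)
  (@asep_off_diag R t) (asep_off_ge0 t_ge0) (asep_irreducible t_ge0) Pr_st wS).
Qed.

End AsepStationary.

Lemma Pr1_wswap (R : realFieldType) (lam : W) (Pr : W -> R) :
  stationary (rearr lam) (asep 1) Pr -> {in rearr lam, forall w, Pr (wswap w) = Pr w}.
Proof.
move=> Pr_st w wS; exact: (stationary_invariant (can_inj wswapK) (@rearr_wswap lam)
  (@asep1_off_wswap R) (@asep_off_diag R 1) (asep_off_ge0 ler01)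
  (asep_irreducible ler01) Pr_st wS).
Qed.

(* Rotation and reflection generate the full symmetric group on the positions. *)
Lemma rearr_sym_reachable : all (fun l =>
  all_reachable (fun x y => (y == rot3 x) || (y == swap01 x)) (rearr_triples l)) triples.
Proof. by vm_compute. Qed.

Lemma rearr_const (R : realFieldType) (F : W -> R) (lam : W) :
  {in rearr lam, forall w, F (wrot w) = F w /\ F (wswap w) = F w} ->
  {in rearr lam &, forall mu nu, F mu = F nu}.
Proof.
move=> F_sym mu nu; rewrite !rearr_triples_code => muL nuL.
have /allP L_range := sel_triples_in_range (fun x => perm_eq (entries x) (entries (code lam))).
rewrite -(codeK nu).
apply: (@reach_ind (fun y => F mu = F (decode y)) (fun x y => (y == rot3 x) || (y == swap01 x))
  _ (code mu) muL); first by rewrite codeK.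
- move=> x y xL _ e_xy ->.
  have /F_sym[F_rot F_swap] : decode x \in rearr lam.
    by rewrite rearr_triples_code decodeK ?L_range.
  by case/orP: e_xy => /eqP ->; rewrite -?wrot_decode -?wswap_decode ?L_range.
- exact: (allP (allP (all_triples_code rearr_sym_reachable lam) _ muL) _ nuL).
Qed.

Lemma rearr_SD lam : nnz lam = 2%N -> {subset rearr lam <= SD}.
Proof. by move=> lam2 w /nnz_rearr; rewrite unfold_in /dasep_space /= lam2 => ->. Qed.

Lemma stationary_ratio_t1 (R : realFieldType) (u : R) (Pd : W -> R) :
  0 < u -> stationary SD (dasep 1 u) Pd ->
  forall lam, nnz lam = 2%N -> forall Pr, stationary (rearr lam) (asep 1) Pr ->
  {in rearr lam &, forall mu nu, Pr mu / Pr nu = Pd mu / Pd nu}.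
Proof.
move=> u_gt0 Pd_st lam lam2 Pr Pr_st mu nu muS nuS.
have Pr_const := rearr_const (fun w wS => conj (Pr_wrot ler01 Pr_st wS) (Pr1_wswap Pr_st wS)).
have Pd_const : {in rearr lam &, forall mu nu, Pd mu = Pd nu}.
  apply: rearr_const => w /(rearr_SD lam2) wS.
  by split; [exact: (Pd_wrot ler01 u_gt0 Pd_st) | exact: (Pd1_wswap u_gt0 Pd_st)].
rewrite (Pr_const mu nu) // (Pd_const mu nu) // !divff // gt_eqF //.
  exact: (Pd_gt0 ler01 u_gt0 Pd_st (rearr_SD lam2 nuS)).
exact: (Pr_gt0 ler01 Pr_st).
Qed.

Ltac eval_counts := repeat match goal with
  | |- context [swap_counts ?x ?y] =>
      let v := eval vm_compute in (swap_counts x y) in change (swap_counts x y) with v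
  | |- context [jump_counts ?x ?y] =>
      let v := eval vm_compute in (jump_counts x y) in change (jump_counts x y) with v
  end.

Lemma dasep_triplesE : dasep_triples = [:: (0,1,1); (0,1,2); (0,2,1); (0,2,2); (1,0,1); (1,0,2);
  (1,1,0); (1,2,0); (2,0,1); (2,0,2); (2,1,0); (2,2,0)]%N.
Proof. by vm_compute. Qed.

(* The balance equations of DASEP(3,2,2) at 120 and 210, after identifying
   rotated words. *)
Lemma Pd_210_120 (R : realFieldType) (t u : R) (Pd : W -> R) :
  0 <= t -> 0 < u -> stationary SD (dasep t u) Pd ->
  Pd (decode (2,1,0)%N) * (u + 3%:R + 4%:R * t) = Pd (decode (1,2,0)%N) * (u + 5%:R + 2%:R * t).
Proof.
move=> t_ge0 u_gt0 Pd_st; have bal := stationary_balance (@dasep_off_diag R t u) Pd_st.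
have sumE (F : W -> R) : \sum_(w | w \in SD) F w = \sum_(x <- dasep_triples) F (decode x).
  exact: big_code (sel_triples_in_range _) (sel_triples_uniq _) SD_triples.
have Pd_rot x : x \in dasep_triples ->
    Pd (decode (rot3 x)) = Pd (decode x) /\ Pd (decode (rot3 (rot3 x))) = Pd (decode x).
  move=> xL; have x_range := allP (sel_triples_in_range _) x xL.
  have x_SD : decode x \in SD by rewrite SD_triples decodeK.
  rewrite -!wrot_decode ?in_range_rot3 // !(Pd_wrot t_ge0 u_gt0 Pd_st) //.
  by rewrite dasep_space_wrot.
have [/= e101 e011] := Pd_rot (1,1,0)%N isT.
have [/= e202 e022] := Pd_rot (2,2,0)%N isT.
have [/= e201 e012] := Pd_rot (1,2,0)%N isT.
have [/= e102 e021] := Pd_rot (2,1,0)%N isT.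
have := bal (decode (1,2,0)%N); have := bal (decode (2,1,0)%N).
rewrite !SD_triples !decodeK // /inflow /outrate !sumE dasep_triplesE !big_cons !big_nil.
rewrite !dasep_offE !decodeK //; eval_counts; rewrite /= e101 e011 e202 e022 e201 e012 e102 e021.
move=> /(_ isT) bal210 /(_ isT) bal120.
have c_neq0 : dasep_c R != 0 by rewrite gt_eqF ?dasep_c_gt0.
by apply: (mulIf c_neq0); lra.
Qed.

Definition lam210 : W := decode (2,1,0)%N.

Definition pr210 (R : realFieldType) (t : R) (w : W) : R :=
  (if code w \in [:: (1,2,0); (2,0,1); (0,1,2)]%N then 1 + 2%:R * t else 2%:R + t)
  / (9%:R * (1 + t)).

Lemma rearr_triples210 : rearr_triples (2,1,0)%N =
  [:: (0,1,2); (0,2,1); (1,0,2); (1,2,0); (2,0,1); (2,1,0)]%N.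
Proof. by vm_compute. Qed.

Lemma pr210_stationary (R : realFieldType) (t : R) :
  0 <= t -> stationary (rearr lam210) (asep t) (pr210 t).
Proof.
move=> t_ge0; have t1_neq0 : 1 + t != 0 by rewrite gt_eqF // ltr_pwDl.
have sumE (F : W -> R) :
    \sum_(w | w \in rearr lam210) F w = \sum_(x <- rearr_triples (2,1,0)%N) F (decode x).
  apply: big_code (sel_triples_in_range _) (sel_triples_uniq _) _ => w.
  by rewrite rearr_triples_code decodeK.
apply: (balance_stationary (@asep_off_diag R t)).
- move=> w _; rewrite /pr210 divr_ge0 ?mulr_ge0 ?addr_ge0 //.
  by case: ifP; rewrite ?addr_ge0 ?mulr_ge0.
- rewrite sumE rearr_triples210 !big_cons big_nil /pr210 !decodeK //=; field.
  by rewrite t1_neq0.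
move=> nu; rewrite rearr_triples_code decodeK // rearr_triples210.
rewrite -[nu in inflow _ _ _ nu](codeK nu) -[nu in pr210 t nu](codeK nu).
rewrite -[nu in outrate _ _ nu](codeK nu).
move: (code nu) => x; rewrite !inE.
case/orP => [/eqP-> | /orP[/eqP-> | /orP[/eqP-> | /orP[/eqP-> | /orP[/eqP-> | /eqP->]]]]];
  rewrite /inflow /outrate !sumE rearr_triples210 !big_cons !big_nil !asep_offE !decodeK //;
  eval_counts; rewrite /pr210 !decodeK //= /asep_c; field; rewrite ?t1_neq0 ?pnatr_eq0 //.
Qed.

Lemma t_eq1_of_ratio210 (R : realFieldType) (t u : R) (Pd : W -> R) :
  0 <= t -> 0 < u -> stationary SD (dasep t u) Pd ->
  pr210 t (decode (1,2,0)%N) / pr210 t (decode (2,1,0)%N) =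
    Pd (decode (1,2,0)%N) / Pd (decode (2,1,0)%N) ->
  t = 1.
Proof.
move=> t_ge0 u_gt0 Pd_st; have Pd_rel := Pd_210_120 t_ge0 u_gt0 Pd_st.
set X := Pd (decode (1,2,0)%N) in Pd_rel *; set Y := Pd (decode (2,1,0)%N) in Pd_rel *.
have Y_gt0 : 0 < Y by apply: (Pd_gt0 t_ge0 u_gt0 Pd_st); rewrite SD_triples decodeK.
have t1_neq0 : 1 + t != 0 by rewrite gt_eqF // ltr_pwDl.
have t2_neq0 : 2%:R + t != 0 by rewrite gt_eqF // ltr_pwDl.
have -> : pr210 t (decode (1,2,0)%N) / pr210 t (decode (2,1,0)%N) = (1 + 2%:R * t) / (2%:R + t).
  by rewrite /pr210 !decodeK //=; field; rewrite ?t1_neq0 ?t2_neq0 ?pnatr_eq0.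
move/eqP; rewrite eqr_div ?t2_neq0 ?(gt_eqF Y_gt0) // => /eqP cross.
have : Y * ((1 - t) * (u + 1)) = 0.
  transitivity ((2%:R + t) * (Y * (u + 3%:R + 4%:R * t) - X * (u + 5%:R + 2%:R * t)) +
                (u + 5%:R + 2%:R * t) * (X * (2%:R + t) - (1 + 2%:R * t) * Y)); first by ring.
  by rewrite Pd_rel -cross !subrr !mulr0 addr0.
move/eqP; rewrite !mulf_eq0 (gt_eqF Y_gt0) subr_eq0 (gt_eqF (ltr_wpDl (ltW u_gt0) ltr01)) orbF.
by move=> /eqP.
Qed.

Unset Implicit Arguments.

Theorem mainTheorem1 (R : realFieldType) (t u : R)
  (ht0 : 0 <= t) (ht1 : t <= 1) (hu : 0 < u)
  (Pd : word 3 2 -> R) (hPd : Pd_stationary (n := 2) t u 2 Pd) :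
  t = 1 <->
  (forall lam : word 3 2, is_partition lam -> nnz lam = 2%N ->
   forall Pr : word 3 2 -> R, Pr_stationary t lam Pr ->
   forall mu nu : word 3 2, mu \in rearr lam -> nu \in rearr lam ->
     Pr mu / Pr nu = Pd mu / Pd nu).
Proof.
split=> [t1 lam _ lam2 Pr | ratio].
  by rewrite t1 in hPd *; exact: stationary_ratio_t1 hu hPd lam lam2 Pr.
apply: (t_eq1_of_ratio210 ht0 hu hPd).
apply: (ratio lam210 _ _ _ (pr210_stationary ht0)).
- by rewrite is_partition_code decodeK.
- by rewrite nnz_code decodeK.
- by rewrite rearr_code !decodeK.
- by rewrite rearr_code !decodeK.
Qed.
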